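(* Let $L>0$, let $n$ be a positive integer, $\Delta x = 2L/n$, and let $X_n=\{x_0,\dots,x_{n-1}\}$ with $x_i=-L+i\Delta x$. Let $k\ge 1$ and let $\omega_1,\dots,\omega_k$ be discrete measures on $\mathbb{R}$ of the form $\omega_\ell=\sum_i a_i^\ell\,\delta_{s_i^\ell}$ (finitely many atoms) with $a_i^\ell\ge 0$ and $-L\le s_i^\ell\le L-\Delta x$ for all $i,\ell$. Fix a constant $C\in[0,1]$ and define, for $\varepsilon>0$, $$\delta(\varepsilon)=C+\int_\varepsilon^\infty (1-e^{\varepsilon-s})\,(\omega_1*\cdots*\omega_k)(s)\,ds .$$ For each $\ell$ let $\omega_\ell^{\mathrm L}=\sum_i a_i^\ell\,\delta_{s_i^{\mathrm L,\ell}}$ and $\omega_\ell^{\mathrm R}=\sum_i a_i^\ell\,\delta_{s_i^{\mathrm R,\ell}}$, where $s_i^{\mathrm L,\ell}=\max\{x\in X_n: x\le s_i^\ell\}$ and $s_i^{\mathrm R,\ell}=\min\{x\in X_n: x\ge s_i^\ell\}$, and let $\delta^{\mathrm L}(\varepsilon)$, $\delta^{\mathrm R}(\varepsilon)$ be defined by the same formula (with the same constant $C$) with $\omega_\ell$ replaced by $\omega_\ell^{\mathrm L}$, resp. $\omega_\ell^{\mathrm R}$. Then for all $\varepsilon>0$, $$\delta^{\mathrm L}(\varepsilon)\le\delta(\varepsilon)\le\delta^{\mathrm R}(\varepsilon).$$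
   Context: $\delta_t$ denotes the Dirac point mass at $t$. The convolution of discrete measures is $\big(\sum_i a_i\delta_{t_i}\big)*\big(\sum_j b_j\delta_{u_j}\big)=\sum_{i,j}a_ib_j\,\delta_{t_i+u_j}$, and $\int_\varepsilon^\infty h(s)\,\mu(s)\,ds$ for a discrete measure $\mu=\sum_i c_i\delta_{t_i}$ means $\sum_{i:\,t_i\ge\varepsilon} c_i h(t_i)$. In the paper, $C=1-\prod_{\ell}(1-\delta_\ell(\infty))$ is the contribution of outcomes with infinite privacy loss, which is unaffected by the grid approximation. *)

From Stdlib Require Import Reals Lra List.
Import ListNotations.
Open Scope R_scope.

(* A finitely supported discrete measure sum_i a_i delta_{t_i},
   represented as the list of pairs (a_i, t_i) (weight, atom). *)
Definition dmeas := list (R * R).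

(* Convolution of discrete measures:
   (sum_i a_i d_{t_i}) * (sum_j b_j d_{u_j}) = sum_{i,j} a_i b_j d_{t_i+u_j}. *)
Definition dconv (m1 m2 : dmeas) : dmeas :=
  flat_map (fun p => map (fun q => (fst p * fst q, snd p + snd q)) m2) m1.

Definition dconv_all (ws : list dmeas) : dmeas :=
  fold_right dconv [(1, 0)] ws.

(* int_eps^infty h(s) mu(s) ds := sum_{i : t_i >= eps} c_i h(t_i). *)
Definition tail_int (eps : R) (h : R -> R) (mu : dmeas) : R :=
  fold_right Rplus 0
    (map (fun p => if Rle_dec eps (snd p) then fst p * h (snd p) else 0) mu).

Definition delta_fn (C : R) (ws : list dmeas) (eps : R) : R :=
  C + tail_int eps (fun s => 1 - exp (eps - s)) (dconv_all ws).

Definition dx (L : R) (n : nat) : R := 2 * L / INR n.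
Definition grid (L : R) (n : nat) : list R :=
  map (fun i => - L + INR i * dx L n) (seq 0 n).

(* s^L = max {x in X_n : x <= s}   (default -L = x_0, which lies in the set
   whenever s >= -L) *)
Definition round_L (L : R) (n : nat) (s : R) : R :=
  fold_right Rmax (- L)
    (filter (fun x => if Rle_dec x s then true else false) (grid L n)).

(* s^R = min {x in X_n : x >= s}   (default L - dx = x_{n-1}, which lies in
   the set whenever s <= L - dx) *)
Definition round_R (L : R) (n : nat) (s : R) : R :=
  fold_right Rmin (L - dx L n)
    (filter (fun x => if Rle_dec s x then true else false) (grid L n)).

Definition shift_atoms (f : R -> R) (w : dmeas) : dmeas :=
  map (fun p => (fst p, f (snd p))) w.

From Stdlib Require Import Reals List Lra.
Open Scope R_scope.

(* The integrand t |-> [t >= eps] (1 - e^(eps - t)) of delta is nonnegative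
   and nondecreasing in t.  Hence moving atoms of a measure with nonnegative
   weights to the right can only increase the tail integral; convolution with
   nonnegative weights preserves this "atoms moved right" order, because the
   atoms of a convolution are sums of atoms.  Rounding every atom down (up) to
   the grid moves it left (right), which gives both inequalities. *)

Definition dmeas_le (m1 m2 : dmeas) : Prop :=
  Forall2 (fun p q => fst p = fst q /\ 0 <= fst p /\ snd p <= snd q) m1 m2.

Lemma tail_int_mono eps (h : R -> R) m1 m2 :
  (forall t, eps <= t -> 0 <= h t) ->
  (forall s t, eps <= s -> s <= t -> h s <= h t) ->
  dmeas_le m1 m2 -> tail_int eps h m1 <= tail_int eps h m2.
Proof.
  intros h_ge0 h_mono.
  induction 1 as [|[a s] [b t] m1 m2 [ab [a_ge0 st]] _ IH];
    unfold tail_int in *; simpl in *; [lra|].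
  apply Rplus_le_compat; [|exact IH]; subst b.
  destruct (Rle_dec eps s), (Rle_dec eps t); try lra.
  - apply Rmult_le_compat_l; auto.
  - apply Rmult_le_pos; auto.
Qed.

Lemma exp_le_compat x y : x <= y -> exp x <= exp y.
Proof.
  intros [xy | <-]; [left; apply exp_increasing |]; lra.
Qed.

Lemma delta_kernel_ge0 eps t : eps <= t -> 0 <= 1 - exp (eps - t).
Proof.
  intros; pose proof (exp_le_compat (eps - t) 0); rewrite exp_0 in *; lra.
Qed.

Lemma delta_kernel_mono eps s t : s <= t -> 1 - exp (eps - s) <= 1 - exp (eps - t).
Proof. intros; pose proof (exp_le_compat (eps - t) (eps - s)); lra. Qed.

Lemma dmeas_le_translate a s t m1 m2 : 0 <= a -> s <= t -> dmeas_le m1 m2 ->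
  dmeas_le (map (fun q => (a * fst q, s + snd q)) m1)
           (map (fun q => (a * fst q, t + snd q)) m2).
Proof.
  intros a_ge0 st; induction 1 as [|p q m1 m2 [pq [p_ge0 le_pq]] _ IH];
    constructor; simpl; auto.
  rewrite pq in *; split; [reflexivity | split; [apply Rmult_le_pos | lra]]; auto.
Qed.

Lemma dconv_mono a1 a2 b1 b2 : dmeas_le a1 a2 -> dmeas_le b1 b2 ->
  dmeas_le (dconv a1 b1) (dconv a2 b2).
Proof.
  intros Ha Hb; induction Ha as [|p q a1 a2 [pq [p_ge0 le_pq]] _ IH];
    unfold dconv in *; simpl; constructor || apply Forall2_app; auto.
  rewrite <- pq; apply dmeas_le_translate; auto.
Qed.

Lemma dconv_all_mono ws1 ws2 : Forall2 dmeas_le ws1 ws2 ->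
  dmeas_le (dconv_all ws1) (dconv_all ws2).
Proof.
  induction 1; unfold dconv_all in *; simpl.
  - repeat constructor; simpl; lra.
  - apply dconv_mono; auto.
Qed.

Lemma delta_fn_mono C ws1 ws2 eps : Forall2 dmeas_le ws1 ws2 ->
  delta_fn C ws1 eps <= delta_fn C ws2 eps.
Proof.
  intros; unfold delta_fn; apply Rplus_le_compat_l, tail_int_mono.
  - apply delta_kernel_ge0.
  - intros; apply delta_kernel_mono; auto.
  - apply dconv_all_mono; auto.
Qed.

Lemma shift_atoms_id w : shift_atoms (fun s => s) w = w.
Proof.
  unfold shift_atoms; rewrite <- (map_id w) at 2.
  apply map_ext; intros [a t]; reflexivity.
Qed.

Lemma map_shift_atoms_id ws : map (shift_atoms (fun s => s)) ws = ws.
Proof.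
  rewrite <- (map_id ws) at 2; apply map_ext, shift_atoms_id.
Qed.

Lemma dmeas_le_shift_atoms f g w :
  (forall p, In p w -> 0 <= fst p /\ f (snd p) <= g (snd p)) ->
  dmeas_le (shift_atoms f w) (shift_atoms g w).
Proof.
  induction w as [|p w IH]; intros Hw; constructor; simpl.
  - destruct (Hw p (or_introl eq_refl)); auto.
  - apply IH; intros; apply Hw; right; auto.
Qed.

Lemma delta_fn_shift_atoms_mono C eps f g ws :
  (forall w, In w ws -> forall p, In p w -> 0 <= fst p /\ f (snd p) <= g (snd p)) ->
  delta_fn C (map (shift_atoms f) ws) eps <= delta_fn C (map (shift_atoms g) ws) eps.
Proof.
  intros Hws; apply delta_fn_mono.
  induction ws as [|w ws IH]; constructor.
  - apply dmeas_le_shift_atoms, Hws; left; reflexivity.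
  - apply IH; intros w' Hw'; apply Hws; right; exact Hw'.
Qed.

Lemma fold_right_Rmax_lub a s l : a <= s -> (forall x, In x l -> x <= s) ->
  fold_right Rmax a l <= s.
Proof.
  intros a_le; induction l; simpl; intros H; auto.
  apply Rmax_lub; auto.
Qed.

Lemma fold_right_Rmin_glb a s l : s <= a -> (forall x, In x l -> s <= x) ->
  s <= fold_right Rmin a l.
Proof.
  intros le_a; induction l; simpl; intros H; auto.
  apply Rmin_glb; auto.
Qed.

Lemma round_L_le L n s : - L <= s -> round_L L n s <= s.
Proof.
  intros; apply fold_right_Rmax_lub; auto.
  intros x Hx; apply filter_In in Hx as [_ Hx].
  destruct (Rle_dec x s); [auto | discriminate].
Qed.

Lemma round_R_ge L n s : s <= L - dx L n -> s <= round_R L n s.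
Proof.
  intros; apply fold_right_Rmin_glb; auto.
  intros x Hx; apply filter_In in Hx as [_ Hx].
  destruct (Rle_dec s x); [auto | discriminate].
Qed.

(* Only the nonnegativity of the weights and -L <= s <= L - dx (which makes the
   default values of round_L and round_R harmless) are used. *)
Theorem lemma5 (L : R) (n : nat) (ws : list dmeas) (C eps : R) :
  0 < L -> (0 < n)%nat -> (1 <= length ws)%nat ->
  (forall w, In w ws -> forall p, In p w ->
      0 <= fst p /\ - L <= snd p <= L - dx L n) ->
  0 <= C <= 1 -> 0 < eps ->
  delta_fn C (map (shift_atoms (round_L L n)) ws) eps <= delta_fn C ws eps /\
  delta_fn C ws eps <= delta_fn C (map (shift_atoms (round_R L n)) ws) eps.
Proof.
  intros _ _ _ Hws _ _; split.
  - rewrite <- (map_shift_atoms_id ws) at 2.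
    apply delta_fn_shift_atoms_mono; intros w Hw p Hp.
    destruct (Hws w Hw p Hp) as [a_ge0 [s_ge _]].
    split; [| apply round_L_le]; auto.
  - rewrite <- (map_shift_atoms_id ws) at 1.
    apply delta_fn_shift_atoms_mono; intros w Hw p Hp.
    destruct (Hws w Hw p Hp) as [a_ge0 [_ s_le]].
    split; [| apply round_R_ge]; auto.
Qed.
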